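(* For every $\varepsilon>0$ there is $\delta>0$ such that the following holds. Let $G=(V_1,V_2,E)$ be a bipartite graph with $|V_1|\ge|V_2|/2$, and let $\mathcal P=\{x_0,x_1,\ldots,x_{|V_2|^{0.5}}\}$ be an $\varepsilon$-pair-star of size $|V_2|^{0.5}$ rooted at $x_0$ associated to $V_1$. If $W\subset V_2$ is chosen uniformly at random among all subsets of $V_2$, then $\mathbb P\big(|A^W_{\mathcal P}|\ge\delta|V_2|^{0.5}\big)\ge 3/4$, where $$A^W_{\mathcal P}:=\{d^W(x_i)-d^W(x_0): i\in[|V_2|^{0.5}]\}\cap[-3|V_2|^{0.5},3|V_2|^{0.5}].$$
   Context: A bipartite graph $G=(V_1,V_2,E)$ has vertex set $V_1\sqcup V_2$ and edge set $E\subset V_1\times V_2$; $N(v)$ is the neighbourhood and $d(v)$ the degree of $v$, and for $S\subset V_2$, $d^S(v)=|N(v)\cap S|$. For $u,v\in V_1$, $\mathrm{div}(u,v)=N(u)\triangle N(v)$. An $\varepsilon$-pair-star of size $k$ associated to $V_1$ rooted at $x_0$ is a set $\{x_0,x_1,\ldots,x_k\}\subset V_1$ with $|d(x_j)-d(x_0)|\le|V_2|^{0.5}$ for all $j\in[k]$ and $|\mathrm{div}(x_i,x_j)|\ge\varepsilon|V_2|$ for all $i\ne j$ in $\{0,\ldots,k\}$. Floors/ceilings of non-integer sizes are ignored. *)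

From HB Require Import structures.
From mathcomp Require Import all_boot all_order all_algebra.
From mathcomp Require Import reals.
Set Implicit Arguments. Unset Strict Implicit. Unset Printing Implicit Defensive.
Import Order.TTheory GRing.Theory Num.Theory.
Local Open Scope ring_scope.

Section Bip.
Variables (V1 V2 : finType) (E : V1 -> V2 -> bool).

Definition nbh (v : V1) : {set V2} := [set y | E v y].
Definition deg (v : V1) : nat := #|nbh v|.
Definition degS (S : {set V2}) (v : V1) : nat := #|nbh v :&: S|.
Definition divset (u v : V1) : {set V2} :=
  (nbh u :\: nbh v) :|: (nbh v :\: nbh u).

(* An eps-pair-star of size k associated to V1 rooted at x0: the set P = {x0,...,xk}
   of k+1 distinct vertices of V1 containing x0, with the degree and divergence conditions. *)
Definition pair_star (R : realType) (eps : R) (k : nat) (x0 : V1) (P : {set V1}) : Prop :=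
  [/\ x0 \in P, #|P| = k.+1,
      (forall x, x \in P -> `|(deg x)%:R - (deg x0)%:R| <= Num.sqrt (#|V2|%:R : R)) &
      (forall x y, x \in P -> y \in P -> x != y -> eps * #|V2|%:R <= (#|divset x y|)%:R)].

(* A^W_P = {d^W(x_i) - d^W(x_0) : i in [k]} ∩ [-3 sqrt|V2|, 3 sqrt|V2|], as a duplicate-free list of integers *)
Definition A_set (R : realType) (W : {set V2}) (x0 : V1) (P : {set V1}) : seq int :=
  undup [seq a <- [seq ((degS W x)%:Z - (degS W x0)%:Z) | x <- enum (P :\ x0)]
         | `|(a%:~R : R)| <= 3 * Num.sqrt (#|V2|%:R : R)].

End Bip.

From mathcomp Require Import all_boot all_order all_algebra.
From mathcomp Require Import reals.
From mathcomp Require Import zify ring lra.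
Set Implicit Arguments. Unset Strict Implicit. Unset Printing Implicit Defensive.
Import Order.TTheory GRing.Theory Num.Theory.

(* Sample q = floor(c sqrt n / 20) + 1 leaves of the star, where n = |V2| and
   c = min(eps, 1), so that c^2 <= eps.  For a uniform W the gap
   d^W(x) - d^W(x0) is, after toggling W on N(x0) \ N(x), a binomial variable
   |W ∩ div(x, x0)| shifted by a constant.  As the degrees of x and x0 differ by
   at most sqrt n, Chebyshev's inequality puts the gap outside
   [-3 sqrt n, 3 sqrt n] with probability at most 1/25.  Two leaves x != y have
   equal gaps exactly when |W ∩ N(x)| = |W ∩ N(y)|, a binomial point mass
   C(d, b) / 2^d <= 1 / sqrt (d + 1) <= 1 / (c sqrt n), because
   d = |div(x, y)| >= eps n >= c^2 n.  Hence the expected number of sampled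
   leaves that leave the window or collide is at most
   q/25 + q (q - 1) / (c sqrt n) <= 9q/100; by Markov's inequality it is at most
   q/2 with probability at least 82/100, and then |A^W_P| >= q/2 >= c sqrt n / 40. *)

Lemma leq_bin_succ d j : j.*2 < d -> 'C(d, j) <= 'C(d, j.+1).
Proof.
move=> jd; rewrite -(leq_pmul2l (ltn0Sn j)) mul_bin_left.
by apply: leq_mul => //; lia.
Qed.

Lemma leq_bin_mid d b : 'C(d, b) <= 'C(d, d./2).
Proof.
have dE := odd_double_half d.
have below j : j <= d./2 -> 'C(d, j) <= 'C(d, d./2).
  move=> jd; have := @homo_leq_in nat [pred i | i <= d./2] (fun i => 'C(d, i)) leq
    (@leqnn) (fun _ _ _ => @leq_trans _ _ _).
  apply => //=.
  - by move=> i k _ kd l /andP [_ /ltnW /leq_trans]; apply.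
  - by move=> i _; rewrite inE => iSd; apply: leq_bin_succ; lia.
  - by rewrite inE.
case: (leqP b d./2) => [/below // | hb].
case: (leqP b d) => bd; last by rewrite bin_small.
by rewrite -bin_sub //; apply: below; lia.
Qed.

Lemma bin_odd_mid m : m.+1 * 'C(m.*2.+1, m) = m.*2.+1 * 'C(m.*2, m).
Proof.
rewrite (mul_bin_diag m.*2.+1) -[in RHS](bin_sub (n := m.*2.+1)); last lia.
by congr (_ * 'C(_, _)); lia.
Qed.

Lemma bin_even_mid m : 'C(m.+1.*2, m.+1) = 2 * 'C(m.*2.+1, m).
Proof.
apply/eqP; rewrite -(eqn_pmul2l (ltn0Sn m)) -mul_bin_diag /=.
by rewrite -mul2n -mulnA mulnCA.
Qed.

Lemma central_bin_sqr_le m : 'C(m.*2, m) ^ 2 * m.*2.+1 <= 16 ^ m.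
Proof.
elim: m => [|m IH]; first by rewrite bin0.
have := bin_odd_mid m; rewrite -(@leq_pmul2r (m.+1 ^ 2)) // bin_even_mid.
move: IH; set a := 'C(m.*2, m); set c := 'C(m.*2.+1, m) => IH ec.
have -> : (2 * c) ^ 2 * m.+1.*2.+1 * m.+1 ^ 2
           = 4 * (m.*2.+1 * m.*2.+3) * (a ^ 2 * m.*2.+1).
  transitivity (4 * (m.+1 * c) ^ 2 * m.*2.+3); first by rewrite doubleS; ring.
  by rewrite ec; ring.
rewrite [16 ^ _.+1]expnS [X in _ <= X]mulnAC.
by apply: leq_mul => //; nia.
Qed.

Lemma odd_mid_bin_sqr_le m : 'C(m.*2.+1, m) ^ 2 * m.*2.+2 <= 4 * 16 ^ m.
Proof.
have := bin_odd_mid m; rewrite -(@leq_pmul2r (m.+1 ^ 2)) //.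
have := central_bin_sqr_le m; set a := 'C(m.*2, m); set c := 'C(m.*2.+1, m) => IH ec.
have -> : c ^ 2 * m.*2.+2 * m.+1 ^ 2 = (m.*2.+1 * m.*2.+2) * (a ^ 2 * m.*2.+1).
  transitivity ((m.+1 * c) ^ 2 * m.*2.+2); first by ring.
  by rewrite ec; ring.
rewrite [X in _ <= X]mulnAC; apply: leq_mul IH; nia.
Qed.

Lemma bin_sqr_le d b : 'C(d, b) ^ 2 * d.+1 <= 4 ^ d.
Proof.
apply: leq_trans (_ : 'C(d, d./2) ^ 2 * d.+1 <= _).
  by rewrite leq_mul2r leq_exp2r ?leq_bin_mid ?orbT.
have := odd_double_half d; set k := d./2.
have pow4E : 4 ^ k.*2 = 16 ^ k by rewrite -mul2n expnM.
case: (odd d) => /= <-.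
  by rewrite add1n [4 ^ _]expnS pow4E; exact: odd_mid_bin_sqr_le.
by rewrite add0n pow4E; exact: central_bin_sqr_le.
Qed.

Section Counting.
Variable T : finType.
Implicit Types Q S : {set T}.

Lemma exchange_sum_card (I : finType) (A : {set T}) (p : I -> T -> bool) :
  \sum_(i : I) #|[set x in A | p i x]| = \sum_(x in A) #|[set i | p i x]|.
Proof.
under eq_bigr => i _ do rewrite -sum1_card big_mkcond /=.
rewrite exchange_big /= [RHS]big_mkcond /=; apply: eq_bigr => x _.
case: (boolP (x \in A)) => xA; last by rewrite big1 // => i _; rewrite inE (negbTE xA).
by rewrite -sum1_card [RHS]big_mkcond; apply: eq_bigr => i _; rewrite !inE xA.
Qed.

Definition offdiag Q : {set T * T} := [set p in setX Q Q | p.1 != p.2].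

Lemma card_offdiag Q : #|offdiag Q| = #|Q| * #|Q|.-1.
Proof.
have diagE : setX Q Q :&: [set p | p.1 == p.2] = (fun x => (x, x)) @: Q.
  apply/setP => -[x y]; rewrite !inE /=; apply/idP/imsetP.
    by move=> /andP [/andP [xQ _] /eqP <-]; exists x.
  by move=> [z zQ [-> ->]]; rewrite zQ eqxx.
have := cardsID [set p | p.1 == p.2] (setX Q Q).
rewrite diagE card_imset => [|x y [] //]; rewrite cardsX.
have -> : setX Q Q :\: [set p | p.1 == p.2] = offdiag Q by apply/setP => p; rewrite !inE andbC.
by rewrite -subn1 mulnBr muln1 => <-; rewrite addKn.
Qed.

Lemma card_le_undup_filter (Z : eqType) (f : T -> Z) (good : pred Z) S Q :
  Q \subset S ->
  #|Q| <= size (undup [seq a <- [seq f x | x <- enum S] | good a])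
           + #|[set x in Q | ~~ good (f x)]|
           + #|[set p in offdiag Q | f p.1 == f p.2]|.
Proof.
move=> QS; set Bad := [set x in Q | _]; set Col := [set p in offdiag Q | _].
set Z0 := Q :\: (Bad :|: fst @: Col).
have Z0_le : #|Z0| <= size (undup [seq a <- [seq f x | x <- enum S] | good a]).
  rewrite cardE -(size_map f); apply: uniq_leq_size.
    rewrite map_inj_in_uniq ?enum_uniq // => x y; rewrite !mem_enum !inE.
    move=> /andP [xBC xQ] /andP [_ yQ] fxy; case: (eqVneq x y) => // xy.
    move: xBC; rewrite negb_or => /andP [_ xC]; case/negP: xC; apply/imsetP.
    by exists (x, y); rewrite // !inE /= xQ yQ xy fxy eqxx.
  move=> a /mapP [x]; rewrite mem_enum !inE negb_or => /andP [/andP [xB _] xQ] ->.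
  rewrite mem_undup mem_filter; move: xB; rewrite xQ negbK => -> /=.
  by apply: map_f; rewrite mem_enum (subsetP QS).
apply: leq_trans (_ : #|Z0| + #|Bad| + #|Col| <= _); last by rewrite !leq_add2r.
apply: leq_trans (_ : #|Z0 :|: (Bad :|: fst @: Col)| <= _).
  apply/subset_leq_card/subsetP => x xQ.
  by rewrite /Z0 in_setU in_setD xQ andbT orNb.
rewrite -addnA; apply: leq_trans (leq_card_setU _ _) _; rewrite leq_add2l.
by apply: leq_trans (leq_card_setU _ _) _; rewrite leq_add2l leq_imset_card.
Qed.

Lemma exists_subset_card S n : n <= #|S| -> exists2 Q : {set T}, Q \subset S & #|Q| = n.
Proof.
move=> nS; exists [set x : T in take n (enum S)].
  by apply/subsetP => x; rewrite inE => /mem_take; rewrite mem_enum.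
rewrite cardsE (card_uniqP _) ?take_uniq ?enum_uniq //.
by rewrite size_takel // -cardE.
Qed.

End Counting.

Local Open Scope ring_scope.

Lemma natr_card (R : pzSemiRingType) (T : finType) (A : {set T}) :
  (#|A|%:R : R) = \sum_(x : T) (x \in A)%:R.
Proof.
rewrite -sum1_card natr_sum big_mkcond /=.
by apply: eq_bigr => x _; case: (x \in A).
Qed.

Lemma markov_card (R : numDomainType) (T : finType) (Y : T -> R) (t : R) :
  (forall x, 0 <= Y x) -> t * #|[set x | t <= Y x]|%:R <= \sum_(x : T) Y x.
Proof.
move=> Y_ge0; rewrite natr_card mulr_sumr; apply: ler_sum => x _.
by rewrite inE; case: (boolP (t <= _)) => /= tY; rewrite ?mulr1n ?mulr1 ?mulr0.
Qed.

Section SubsetSums.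
Variable V : finType.
Implicit Types (D U W : {set V}) (z : V).

Lemma setU1_ind (P : {set V} -> Prop) :
  P set0 -> (forall D z, z \notin D -> P D -> P (z |: D)) -> forall D, P D.
Proof.
move=> P0 PS D; have [n] := ubnP #|D|; elim: n D => // n IH D Dn.
have [-> // | [z zD]] := set_0Vmem D.
rewrite -(setD1K zD); apply: PS; first by rewrite setD11.
by apply: IH; rewrite (cardsD1 z D) zD in Dn.
Qed.

Lemma sum_subsets_toggle (M : nmodType) z (G : {set V} -> M) :
  \sum_(W : {set V}) G W = \sum_(W : {set V} | z \notin W) (G W + G (z |: W)).
Proof.
rewrite (bigID (fun W => z \notin W)) /= big_split /=; congr (_ + _).
rewrite (reindex_onto (fun W => z |: W) (fun W => W :\ z)) /=; last first.
  by move=> W /negPn zW; rewrite setD1K.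
apply: eq_bigl => W; rewrite setU11 /=; apply/eqP/idP => [<- | zW]; first by rewrite setD11.
by rewrite setU1K.
Qed.

Definition sum_card_meet (M : nmodType) D (F : nat -> M) : M :=
  \sum_(W : {set V}) F #|W :&: D|.

Lemma sum_card_meet0 (M : nmodType) (F : nat -> M) :
  sum_card_meet set0 F = F 0%N *+ #|{set V}|.
Proof.
rewrite /sum_card_meet (eq_bigr (fun => F 0%N)) ?sumr_const // => W _.
by rewrite setI0 cards0.
Qed.

Lemma sum_card_meet_setU1 (M : nmodType) D z (F : nat -> M) : z \notin D ->
  sum_card_meet (z |: D) F *+ 2 = sum_card_meet D F + sum_card_meet D (F \o succn).
Proof.
move=> zD; have meetU1 W : (z |: W) :&: D = W :&: D.
  by apply/setP => y; rewrite !inE; case: eqP => [->|]; rewrite ?(negbTE zD) ?andbF.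
rewrite /sum_card_meet !(sum_subsets_toggle z) -!big_split /=.
rewrite -sumrMnl; apply: eq_bigr => W zW; rewrite !meetU1 -setUIr cardsU1 !inE.
have -> : W :&: (z |: D) = W :&: D.
  by apply/setP => y; rewrite !inE; case: eqP => [->|]; rewrite ?(negbTE zW).
by rewrite (negbTE zW) /= add1n mulrnDl !mulr2n.
Qed.

Lemma sum_card_meet_bin (R : numDomainType) D b :
  sum_card_meet D (fun j => (j == b)%:R : R) * 2 ^+ #|D| =
  #|{set V}|%:R * 'C(#|D|, b)%:R.
Proof.
elim/setU1_ind: D b => [|D z zD IH] b.
  by rewrite sum_card_meet0 cards0 expr0 mulr1 bin0n eq_sym mulr_natl.
rewrite cardsU1 zD add1n exprS mulrA mulr_natr sum_card_meet_setU1 // mulrDl.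
case: b => [|b].
  by rewrite IH bin0 [sum_card_meet D _]big1 ?mul0r ?addr0.
have -> : sum_card_meet D ((fun j => (j == b.+1)%:R : R) \o succn) =
          sum_card_meet D (fun j => (j == b)%:R) by [].
by rewrite !IH binS natrD mulrDr.
Qed.

Lemma sum_card_meet_var (R : numDomainType) D :
  sum_card_meet D (fun j => (j%:R *+ 2 - #|D|%:R) ^+ 2 : R) =
  #|{set V}|%:R * #|D|%:R.
Proof.
elim/setU1_ind: D => [|D z zD IH].
  by rewrite sum_card_meet0 cards0 mul0rn subr0 expr2 mul0r mul0rn mulr0.
apply: (inc_inj (ler_pMn2r (ltn0Sn 1))) => /=.
rewrite sum_card_meet_setU1 // /sum_card_meet -big_split /= cardsU1 zD add1n.
rewrite (eq_bigr (fun W => ((#|W :&: D|%:R *+ 2 - #|D|%:R) ^+ 2 + 1) *+ 2)); last first.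
  by move=> W _; rewrite -!natr1 !mulr2n; ring.
rewrite /sum_card_meet in IH.
by rewrite sumrMnl big_split /= sumr_const IH -natr1 mulrDr mulr1.
Qed.

Definition setSD (A B : {set V}) : {set V} := (A :\: B) :|: (B :\: A).

Lemma card_setSD U U' : #|setSD U U'| = (#|U :\: U'| + #|U' :\: U|)%N.
Proof.
rewrite cardsU (_ : _ :&: _ = set0) ?cards0 ?subn0 //.
by apply/setP => y; rewrite !inE; case: (y \in U); rewrite ?andbF.
Qed.

Lemma card_setSD_sub_double (R : comPzRingType) U U' :
  #|setSD U U'|%:R - #|U' :\: U|%:R *+ 2 = #|U|%:R - #|U'|%:R :> R.
Proof.
by rewrite card_setSD -(cardsID U' U) -(cardsID U U') setIC !natrD mulr2n; ring.
Qed.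

(* Toggling W on U' :\: U turns |U ∩ W| - |U' ∩ W| into |W ∩ (U Δ U')| - |U' \ U|. *)
Lemma card_meet_diff_toggle U U' (p : pred int) :
  #|[set W : {set V} | p (#|U :&: W|%:Z - #|U' :&: W|%:Z)]| =
  #|[set W : {set V} | p (#|W :&: setSD U U'|%:Z - #|U' :\: U|%:Z)]|.
Proof.
pose t W := setSD W (U' :\: U).
have tK : involutive t.
  move=> W; apply/setP => y; rewrite !inE.
  by case: (y \in W); case: (y \in U); case: (y \in U').
have tE W : #|U :&: W|%:Z - #|U' :&: W|%:Z = #|t W :&: setSD U U'|%:Z - #|U' :\: U|%:Z.
  rewrite -!natz !natr_card -!sumrB; apply: eq_bigr => y _; rewrite !inE.
  by case: (y \in U); case: (y \in U'); case: (y \in W).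
rewrite -[RHS](card_preimset _ (inv_inj tK)).
by apply: eq_card => W; rewrite !inE tE.
Qed.

Lemma card_far_meet_diff (R : realFieldType) U U' (s : R) :
  0 < s -> #|V|%:R <= s ^+ 2 -> `|#|U|%:R - #|U'|%:R| <= s ->
  #|[set W : {set V} | 3 * s < `|(#|U :&: W|%:Z - #|U' :&: W|%:Z)%:~R : R|]|%:R * 25
  <= #|{set V}|%:R :> R.
Proof.
move=> s_gt0 V_le deg_near.
rewrite (card_meet_diff_toggle U U' (fun a => 3 * s < `|a%:~R : R|)).
set D := setSD U U'; set b := #|U' :\: U|.
pose Y W : R := (#|W :&: D|%:R *+ 2 - #|D|%:R) ^+ 2.
have far W : 3 * s < `|(#|W :&: D|%:Z - b%:Z)%:~R| -> 25 * s ^+ 2 <= Y W.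
  rewrite rmorphB /= -!pmulrn /Y; move: deg_near.
  rewrite -(card_setSD_sub_double R) -/D -/b !mulr2n.
  move: (#|W :&: D|%:R) (b%:R) (#|D|%:R) => j k d.
  by rewrite ltr_normr ler_norml => /andP [? ?] /orP [?|?]; nra.
have sumY : \sum_(W : {set V}) Y W = #|{set V}|%:R * #|D|%:R := sum_card_meet_var R D.
have D_le : #|D|%:R <= s ^+ 2 by apply: le_trans V_le; rewrite ler_nat max_card.
have far_le : #|[set W | 3 * s < `|(#|W :&: D|%:Z - b%:Z)%:~R : R|]|%:R
              <= #|[set W | 25 * s ^+ 2 <= Y W]|%:R :> R.
  by rewrite ler_nat; apply/subset_leq_card/subsetP => W; rewrite !inE; exact: far.
have := markov_card (25 * s ^+ 2) (fun W => sqr_ge0 _ : 0 <= Y W).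
rewrite sumY => markov; rewrite -(ler_pM2r (exprn_gt0 2 s_gt0)).
apply: le_trans (le_trans _ markov) _; last by rewrite ler_wpM2l.
by rewrite -mulrA [X in X <= _]mulrC ler_wpM2l // mulr_ge0 // sqr_ge0.
Qed.

Lemma card_eq_meet_sqr (R : realFieldType) U U' :
  (#|[set W : {set V} | #|U :&: W| == #|U' :&: W|]|%:R : R) ^+ 2
    * #|setSD U U'|.+1%:R <= #|{set V}|%:R ^+ 2.
Proof.
set D := setSD U U'; set b := #|U' :\: U|.
have -> : #|[set W : {set V} | #|U :&: W| == #|U' :&: W|]|%:R =
          sum_card_meet D (fun j => (j == b)%:R : R).
  rewrite (eq_card (B := [set W | #|U :&: W|%:Z - #|U' :&: W|%:Z == 0])); last first.
    by move=> W; rewrite !inE subr_eq0 eqz_nat.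
  rewrite (card_meet_diff_toggle U U' (fun a => a == 0)) natr_card.
  by apply: eq_bigr => W _; rewrite !inE subr_eq0 eqz_nat.
have := sum_card_meet_bin R D b.
set K := sum_card_meet _ _; set N := #|{set V}|%:R => countE.
have bin_le : 'C(#|D|, b)%:R ^+ 2 * #|D|.+1%:R <= (2 ^+ #|D|) ^+ 2 :> R.
  by rewrite -exprM mulnC exprM -natrX -natrM -!natrX ler_nat; exact: bin_sqr_le.
rewrite -(ler_pM2r (exprn_gt0 2 (exprn_gt0 #|D| (ltr0Sn R 1)))).
have -> : K ^+ 2 * #|D|.+1%:R * (2 ^+ #|D|) ^+ 2
          = N ^+ 2 * ('C(#|D|, b)%:R ^+ 2 * #|D|.+1%:R).
  by transitivity ((K * 2 ^+ #|D|) ^+ 2 * #|D|.+1%:R); [ring | rewrite countE; ring].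
by rewrite ler_wpM2l ?sqr_ge0.
Qed.

End SubsetSums.

Section PairStarSample.
Variables (R : realType) (V1 V2 : finType) (E : V1 -> V2 -> bool).
Variables (x0 : V1) (P Q : {set V1}) (c : R).
Local Notation s := (Num.sqrt (#|V2|%:R : R)).
Local Notation N := (#|{set V2}|%:R : R).
Hypotheses (V2_gt0 : (0 < #|V2|)%N) (c_gt0 : 0 < c) (QP : Q \subset P :\ x0).
Hypothesis deg_near : forall x, x \in P -> `|(deg E x)%:R - (deg E x0)%:R| <= s.
Hypothesis div_large : forall x y, x \in Q -> y \in Q -> x != y ->
  c ^+ 2 * #|V2|%:R <= #|divset E x y|%:R.
Hypothesis Q_small : (#|Q|.-1)%:R * 20 <= c * s.

Let s_gt0 : 0 < s. Proof. by rewrite sqrtr_gt0 ltr0n. Qed.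
Let s_sqr : s ^+ 2 = #|V2|%:R. Proof. exact: sqr_sqrtr. Qed.

Definition deg_gap (W : {set V2}) (x : V1) : int := (degS E W x)%:Z - (degS E W x0)%:Z.
Definition gap_ok (a : int) : bool := `|a%:~R : R| <= 3 * s.
Definition lost (W : {set V2}) : nat :=
  #|[set x in Q | ~~ gap_ok (deg_gap W x)]| +
  #|[set p in offdiag Q | deg_gap W p.1 == deg_gap W p.2]|.

Lemma card_le_A_set_lost W : (#|Q| <= size (A_set E R W x0 P) + lost W)%N.
Proof.
have := card_le_undup_filter (deg_gap W) gap_ok QP.
by rewrite addnA.
Qed.

Lemma sum_card_bad_gap :
  (\sum_(W : {set V2}) #|[set x in Q | ~~ gap_ok (deg_gap W x)]|)%:R * 25
  <= #|Q|%:R * N.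
Proof.
rewrite exchange_sum_card [X in X * _]natr_sum mulr_suml.
rewrite [X in _ <= X]mulrC mulr_natr -[X in _ <= X]sumr_const.
apply: ler_sum => x xQ; have /setD1P [_ xP] := subsetP QP x xQ.
rewrite (eq_card (B := [set W |
    3 * s < `|(#|nbh E x :&: W|%:Z - #|nbh E x0 :&: W|%:Z)%:~R : R|])); last first.
  by move=> W; rewrite !inE /gap_ok -ltNge.
by apply: card_far_meet_diff; rewrite ?s_sqr ?deg_near.
Qed.

Lemma sum_card_gap_collision :
  (\sum_(W : {set V2}) #|[set p in offdiag Q | deg_gap W p.1 == deg_gap W p.2]|)%:R * (c * s)
  <= (#|Q| * #|Q|.-1)%:R * N.
Proof.
rewrite exchange_sum_card [X in X * _]natr_sum mulr_suml -card_offdiag.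
rewrite [X in _ <= X]mulrC mulr_natr -[X in _ <= X]sumr_const.
apply: ler_sum => -[x y]; rewrite !inE /= => /andP [/andP [xQ yQ] xy].
rewrite (eq_card (B := [set W | #|nbh E x :&: W| == #|nbh E y :&: W|])); last first.
  by move=> W; rewrite !inE /deg_gap (inj_eq (addIr _)) eqz_nat.
have := card_eq_meet_sqr R (nbh E x) (nbh E y).
set K := #|_|%:R => K_le.
rewrite -ler_sqr ?nnegrE ?mulr_ge0 ?sqrtr_ge0 ?(ltW c_gt0) //.
apply: le_trans K_le; rewrite exprMn ler_wpM2l ?sqr_ge0 // exprMn s_sqr.
by apply: le_trans (div_large xQ yQ xy) _; rewrite ler_nat.
Qed.

Lemma sum_lost_le : \sum_(W : {set V2}) (lost W)%:R <= #|Q|%:R * N * (9 / 100).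
Proof.
have bad := sum_card_bad_gap; have col := sum_card_gap_collision.
rewrite /lost; under eq_bigr do rewrite natrD.
rewrite big_split /= -!natr_sum.
move: bad col; set B := (\sum_W _)%:R; set C := (\sum_W _)%:R; rewrite natrM => bad col.
have cs_gt0 : 0 < c * s by rewrite mulr_gt0.
have QN_ge0 : 0 <= #|Q|%:R * N :> R by rewrite mulr_ge0.
have C_le : C * 20 <= #|Q|%:R * N.
  rewrite -(ler_pM2r cs_gt0); apply: le_trans (_ : #|Q|%:R * N * ((#|Q|.-1)%:R * 20) <= _).
    by rewrite mulrAC [X in _ <= X]mulrA ler_pM2r // [X in _ <= X]mulrAC.
  exact: ler_wpM2l.
lra.
Qed.

Lemma card_A_set_large :
  3 / 4 * N <= #|[set W : {set V2} | (#|Q| <= (size (A_set E R W x0 P)).*2)%N]|%:R.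
Proof.
set G := [set W | _]; pose t : R := #|Q|.+1%:R / 2.
have t_gt0 : 0 < t by rewrite divr_gt0.
have notG_lost : ~: G \subset [set W | t <= (lost W)%:R].
  apply/subsetP => W; rewrite /G !inE -ltnNge => short.
  have := card_le_A_set_lost W.
  by rewrite ler_pdivrMr // -natrM ler_nat; move: short; rewrite -muln2; lia.
have notG_le : #|~: G|%:R <= N * (18 / 100).
  rewrite -(ler_pM2r t_gt0); apply: le_trans (_ : #|Q|%:R * N * (9 / 100) <= _); last first.
    rewrite (_ : N * _ * t = #|Q|.+1%:R * N * (9 / 100)); last by rewrite /t; field.
    by rewrite -[#|Q|.+1%:R]natr1; have := ler0n R #|{set V2}|; nra.
  apply: le_trans sum_lost_le; rewrite mulrC.
  apply: le_trans (markov_card t (fun W => ler0n R (lost W))).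
  by rewrite ler_wpM2l ?(ltW t_gt0) // ler_nat subset_leq_card.
have NE : #|G|%:R + #|~: G|%:R = N by rewrite -natrD cardsC.
have := ler0n R #|{set V2}|; lra.
Qed.

End PairStarSample.

Lemma truncnS_le_truncn (R : archiRealFieldType) (x y : R) :
  1 <= y -> 0 <= x <= y / 2 -> ((Num.truncn x).+1 <= Num.truncn y)%N.
Proof.
move=> y_ge1 /andP [x_ge0 x_le]; rewrite truncn_lt_nat //.
have := truncnS_gt y; have : 1 <= (Num.truncn y)%:R :> R by rewrite ler1n truncn_gt0.
by rewrite -natr1; lra.
Qed.

Theorem lemma3p3 (R : realType) (eps : R) (heps : 0 < eps) :
  exists delta : R, 0 < delta /\
  forall (V1 V2 : finType) (E : V1 -> V2 -> bool) (x0 : V1) (P : {set V1}),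
    (#|V2| <= 2 * #|V1|)%N ->
    pair_star E eps (Num.truncn (Num.sqrt (#|V2|%:R : R))) x0 P ->
    3 / 4 <=
      (#|[set W : {set V2} |
           delta * Num.sqrt (#|V2|%:R : R) <= (size (@A_set V1 V2 E R W x0 P))%:R]|%:R
       / (#|{set V2}|%:R : R)).
Proof.
pose c := Num.min eps 1.
have c_gt0 : 0 < c by rewrite lt_min heps ltr01.
have c_le1 : c <= 1 by rewrite ge_min lexx orbT.
have c_le_eps : c <= eps by rewrite ge_min lexx.
exists (c / 40); split; first by rewrite divr_gt0.
move=> V1 V2 E x0 P _ [x0P cardP deg_near div_large].
have N_gt0 : 0 < (#|{set V2}|%:R : R) by rewrite ltr0n; apply/card_gt0P; exists set0.
rewrite ler_pdivlMr //; have [V2_0 | V2_gt0] := posnP #|V2|.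
  apply: le_trans (_ : _ <= #|[set: {set V2}]|%:R) _; first by rewrite cardsT; lra.
  rewrite ler_nat; apply/subset_leq_card/subsetP => W _.
  by rewrite inE V2_0 sqrtr0 mulr0 ler0n.
set s := Num.sqrt _ in cardP deg_near *.
have s_ge1 : 1 <= s by rewrite -sqrtr1 ler_sqrt // ler1n.
have cs_ge0 : 0 <= c * s / 20 by rewrite divr_ge0 // mulr_ge0 ?(ltW c_gt0) //; lra.
have q_le : ((Num.truncn (c * s / 20)).+1 <= #|P :\ x0|)%N.
  move: cardP; rewrite (cardsD1 x0) x0P add1n => -[->].
  by apply: truncnS_le_truncn; rewrite // cs_ge0 /=; nra.
have [Q QP cardQ] := exists_subset_card q_le.
apply: le_trans (card_A_set_large V2_gt0 c_gt0 QP deg_near _ _) _.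
- move=> x y xQ yQ xy; have /subsetP QP' := subset_trans QP (subD1set P x0).
  by apply: le_trans (div_large x y (QP' x xQ) (QP' y yQ) xy); rewrite ler_wpM2r //; nra.
- by have := truncn_le (c * s / 20); rewrite cardQ cs_ge0 -/s; lra.
rewrite ler_nat; apply/subset_leq_card/subsetP => W; rewrite !inE cardQ -(ler_nat R).
by have := truncnS_gt (c * s / 20); rewrite -muln2 natrM; lra.
Qed.
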